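(* Let $U$ be a countably infinite universe and $\mathcal{C}=(L_1,L_2,\ldots)$ a countably infinite collection of languages over $U$, and consider the Noisy Procedure in the context. At every execution of step (A), the sizes of the finite sets $T\subseteq U$ satisfying the conditions of step (A) are bounded above (so a largest such $T$ exists whenever some such $T$ exists). In particular, $m^\star_n(L_i)<\infty$ for every $n\ge0$ and $i\ge1$.
   Context: A language is an infinite subset of $U$; a collection is a sequence of languages (repetitions allowed, entries distinguished by index). For a set $T$, language $L$ and integer $a\ge0$, $T$ is $a$-contained in $L$ if $\sum_{x\in T}\mathbf{1}[x\notin L]\le a$. Diagonal order: pairs $(n,i)$, $n\ge0$, $i\ge1$, ordered as $(0,1),(1,1),(0,2),(2,1),(1,2),(0,3),\ldots$, i.e. for $n'=0,1,2,\ldots$ and $h=0,\ldots,n'$ the pair $(n'-h,h+1)$. Each pair $(a,b)$ has an entry $L_{a,b}$, a copy of $L_b$ labelled $(a,b)$. Noisy Procedure. Set $\mathcal{C}'_0=()$. For $l=1,2,\ldots$, let $(n,i)$ be the $l$-th pair; append $L_{n,i}$ to the end of $\mathcal{C}'_{l-1}$ to get $\mathcal{C}'_l=(L'_1,\ldots,L'_l)$, set $j=l$. Repeat: (A) consider finite sets $T\subseteq U$ for which there is a subcollection $\mathcal{D}$ of the entries $(L'_1,\ldots,L'_j)$ such that $\mathcal{D}$ includes $L'_j$, $T$ is $a$-contained in $L_b$ for every entry $L_{a,b}\in\mathcal{D}$, and $\bigcap_{L_{a,b}\in\mathcal{D}}L_b$ is finite; let $T$ be such a set of largest size, $\mathcal{C}_{\mathrm{chk}}$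 a corresponding $\mathcal{D}$, and $m_{\mathrm{chk}}=|T|$ ($0$ if no such $\mathcal{D}$ exists). (B) If $j\le1$ or $m_{\mathrm{chk}}>m^\star_a(L_b)$ where $L'_{j-1}=L_{a,b}$, stop. (C) Otherwise swap positions $j-1,j$, set $j\leftarrow j-1$, return to (A). On stopping, set $T(L_{n,i})=T$, $\mathcal{C}(L_{n,i})=\mathcal{C}_{\mathrm{chk}}$, $m^\star_n(L_i)=m_{\mathrm{chk}}$. *)

From mathcomp Require Import all_boot.
Set Implicit Arguments. Unset Strict Implicit. Unset Printing Implicit Defensive.

(* An entry L_{a,b} of the procedure is represented by its label (a,b);
   it is a copy of the language L_b. *)
Definition entry := (nat * nat)%type.

Definition diag_list (N : nat) : seq entry :=
  flatten [seq [seq (n' - h, h.+1) | h <- iota 0 n'.+1] | n' <- iota 0 N].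

(* The l-th pair (l >= 1) of the diagonal order (diag_list l has >= l items). *)
Definition diag_pair (l : nat) : entry := nth (0, 0) (diag_list l) l.-1.

Section Procedure.
Variable U : countType.
Variable L : nat -> U -> Prop.   (* the collection: L i for i >= 1 *)

(* T (a finite set, given as a duplicate-free sequence) is a-contained in
   the language X: at most a elements of T lie outside X. *)
Definition a_contained (a : nat) (X : U -> Prop) (T : seq U) : Prop :=
  forall S : seq U, uniq S -> {subset S <= T} ->
    (forall x, x \in S -> ~ X x) -> size S <= a.

Definition ent (s : seq entry) (k : nat) : entry := nth (0, 0) s k.

(* T satisfies the conditions of step (A) for the current collection
   s = (L'_1,...,L'_l) and current index j (1-indexed): there is a
   subcollection D of the entries L'_1..L'_j (given by 0-indexed positions
   < j) containing L'_j, such that T is a-contained in L_b for every entry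
   L_{a,b} of D, and the intersection of the L_b over D is finite. *)
Definition stepA_valid (s : seq entry) (j : nat) (T : seq U) : Prop :=
  uniq T /\
  exists D : seq nat,
    j.-1 \in D /\
    (forall k, k \in D -> k < j) /\
    (forall k, k \in D -> a_contained (ent s k).1 (L (ent s k).2) T) /\
    (exists F : seq U, forall x, (forall k, k \in D -> L (ent s k).2 x) -> x \in F).

Definition stepA_outcome (s : seq entry) (j : nat) (mchk : nat) : Prop :=
  ((forall T, ~ stepA_valid s j T) /\ mchk = 0) \/
  (exists T, stepA_valid s j T /\ size T = mchk /\
     forall T', stepA_valid s j T' -> size T' <= size T).

Definition swap_at (s : seq entry) (k : nat) : seq entry :=
  take k s ++ [:: ent s k.+1; ent s k] ++ drop k.+2 s.

(* m* values: m* (a,b) = Some v means m*_a(L_b) = v has been set. *)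
Definition mstar_t := entry -> option nat.

Definition upd (m : mstar_t) (e : entry) (v : nat) : mstar_t :=
  fun e' => if e' == e then Some v else m e'.

(* stopping test of step (B); L'_{j-1} is at 0-indexed position j-2 *)
Definition stop_test (s : seq entry) (j : nat) (m : mstar_t) (mchk : nat) : Prop :=
  j <= 1 \/ (exists v, m (ent s (j.-2)) = Some v /\ v < mchk).

(* Executions of the Noisy Procedure.
   reachA l s j m : step (A) is executed during round l with current
                    collection s, current index j and m* values m.
   reachDone l s m : round l has finished (C'_l = s, m* values m). *)
Inductive reachA : nat -> seq entry -> nat -> mstar_t -> Prop :=
| RA_start l s m : reachDone l s m ->
    reachA l.+1 (rcons s (diag_pair l.+1)) l.+1 m
| RA_swap l s j m mchk : reachA l s j m -> stepA_outcome s j mchk ->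
    ~ stop_test s j m mchk -> reachA l (swap_at s j.-2) j.-1 m
with reachDone : nat -> seq entry -> mstar_t -> Prop :=
| RD_init : reachDone 0 [::] (fun _ => None)
| RD_stop l s j m mchk : reachA l s j m -> stepA_outcome s j mchk ->
    stop_test s j m mchk -> reachDone l s (upd m (ent s j.-1) mchk).

End Procedure.

From mathcomp Require Import all_boot boolp zify.
Set Implicit Arguments. Unset Strict Implicit. Unset Printing Implicit Defensive.

(* If T is a_k-contained in L_(b_k) for every entry (a_k, b_k) of a
   subcollection D whose languages meet in a finite set F, then every element
   of T outside F misses some L_(b_k), so |T| <= |F| + sum_k a_k.  As the
   first j entries have only finitely many subcollections, the valid T of
   step (A) are uniformly bounded and a largest one exists.  Every round then
   terminates: each failed stop test moves the new entry one place to the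
   left, and the test succeeds at the front.  Since every pair (n, i) occurs
   in the diagonal order, m*_n(L_i) is eventually set. *)

Section SubcollectionBound.
Variables (U : countType) (X : nat -> U -> Prop) (a : nat -> nat).

Definition finite_cap (D : seq nat) : Prop :=
  exists F : seq U, forall x, (forall k, k \in D -> X k x) -> x \in F.

Definition contained_in_all (D : seq nat) (T : seq U) : Prop :=
  forall k, k \in D -> a_contained (a k) (X k) T.

Lemma a_contained_sub b (Y : U -> Prop) (T1 T2 : seq U) :
  {subset T1 <= T2} -> a_contained b Y T2 -> a_contained b Y T1.
Proof. by move=> sT12 cT2 S uS sST1; apply: cT2 => // x /sST1/sT12. Qed.

Lemma contained_in_all_sub D (T1 T2 : seq U) :
  {subset T1 <= T2} -> contained_in_all D T2 -> contained_in_all D T1.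
Proof. by move=> sT12 cT2 k /cT2; apply: a_contained_sub. Qed.

Lemma size_le_cap_add_sum D (F T : seq U) : uniq T ->
  (forall x, x \in T -> (forall k, k \in D -> X k x) -> x \in F) ->
  contained_in_all D T -> size T <= size F + sumn (map a D).
Proof.
elim: D T => [|k D IHD] T uT capF cT /=.
  rewrite addn0; apply: uniq_leq_size => // x xT.
  by apply: capF => // k; rewrite in_nil.
pose inXk := fun x => `[< X k x >].
have outXk : count (predC inXk) T <= a k.
  rewrite -size_filter; apply: (cT k (mem_head _ _)); first exact: filter_uniq.
    by move=> x; rewrite mem_filter => /andP[].
  by move=> x; rewrite mem_filter => /andP[/= /asboolPn].
have inXk_le : count inXk T <= size F + sumn (map a D).
  rewrite -size_filter; apply: IHD; first exact: filter_uniq.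
    move=> x; rewrite mem_filter => /andP[/asboolP Xkx xT] XDx.
    by apply: capF => // k'; rewrite in_cons => /predU1P[->|/XDx].
  apply: (contained_in_all_sub (T2 := T)) => [x|k' kD].
    by rewrite mem_filter => /andP[].
  by apply: cT; rewrite in_cons kD orbT.
by rewrite -(count_predC inXk T); lia.
Qed.

Lemma size_bounded_eq_mem (D0 : seq nat) : exists B, forall (D : seq nat) T,
  D =i D0 -> uniq T -> finite_cap D -> contained_in_all D T -> size T <= B.
Proof.
have [[F capF]|noF] := pselect (finite_cap D0).
  exists (size F + sumn (map a D0)) => D T eqD uT _ cT.
  apply: size_le_cap_add_sum => // [x _|k kD0]; first exact: capF.
  by apply: cT; rewrite eqD.
exists 0 => D T eqD _ [F capF]; case: noF; exists F => x XD0x.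
by apply: capF => k; rewrite eqD; apply: XD0x.
Qed.

Lemma uniform_bound (I : finType) (bounded_by : I -> nat -> Prop) :
  (forall i B B', B <= B' -> bounded_by i B -> bounded_by i B') ->
  (forall i, exists B, bounded_by i B) -> exists B, forall i, bounded_by i B.
Proof.
move=> mono bounded.
suff [B HB] : exists B, forall i, i \in enum I -> bounded_by i B.
  by exists B => i; apply: HB; rewrite mem_enum.
elim: (enum I) => [|i s [B HB]]; first by exists 0.
have [Bi HBi] := bounded i.
exists (maxn Bi B) => i'; rewrite in_cons => /predU1P[->|/HB].
  by apply: mono HBi; apply: leq_maxl.
by apply: mono; apply: leq_maxr.
Qed.

Lemma subcollection_size_bounded j : exists B, forall D T,
  (forall k, k \in D -> k < j) -> uniq T ->
  finite_cap D -> contained_in_all D T -> size T <= B.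
Proof.
(* D is determined up to =i by its characteristic vector on positions < j. *)
pose bounded_by (m : j.-tuple bool) B := forall D T, D =i mask m (iota 0 j) ->
  uniq T -> finite_cap D -> contained_in_all D T -> size T <= B.
have [B HB] : exists B, forall m, bounded_by m B.
  apply: uniform_bound => [m B B' BB' HB D T eqD uT capD cT|m].
    exact: leq_trans (HB D T eqD uT capD cT) BB'.
  exact: size_bounded_eq_mem.
exists B => D T Dj; apply: (HB [tuple val k \in D | k < j]) => k /=.
have -> : [seq val i \in D | i <- enum 'I_j] = [seq i \in D | i <- iota 0 j].
  by rewrite -val_enum_ord -map_comp.
rewrite -filter_mask mem_filter mem_iota /=.
by case: (boolP (k \in D)) => // /Dj ->.
Qed.

End SubcollectionBound.

Section Procedure.
Variables (U : countType) (L : nat -> U -> Prop).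

Lemma stepA_valid_bounded s j : exists B, forall T, stepA_valid L s j T -> size T <= B.
Proof.
have [B HB] :=
  subcollection_size_bounded (fun k => L (ent s k).2) (fun k => (ent s k).1) j.
by exists B => T [uT [D [_ [Dj [cT capD]]]]]; apply: HB Dj uT capD cT.
Qed.

Lemma stepA_outcome_exists s j : exists mchk, stepA_outcome L s j mchk.
Proof.
have [[T0 vT0]|noT] := pselect (exists T, stepA_valid L s j T); last first.
  by exists 0; left; split => // T vT; apply: noT; exists T.
have [B HB] := stepA_valid_bounded s j.
pose valid_size n := `[< exists T, stepA_valid L s j T /\ size T = n >].
have exP : exists n, valid_size n by exists (size T0); apply/asboolP; exists T0.
have ubP n : valid_size n -> n <= B by move=> /asboolP[T [vT <-]]; apply: HB.
case: (ex_maxnP exP ubP) => _ /asboolP[T [vT <-]] maxT.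
exists (size T); right; exists T; split=> //; split=> // T' vT'.
by apply: maxT; apply/asboolP; exists T'.
Qed.

Lemma size_swap_at s k : k.+1 < size s -> size (swap_at s k) = size s.
Proof. by move=> ks; rewrite !size_cat size_take size_drop /=; case: ifP; lia. Qed.

Lemma ent_swap_at s k : k.+1 < size s -> ent (swap_at s k) k = ent s k.+1.
Proof. by move=> ks; rewrite /ent nth_cat size_takel ?ltnn ?subnn // ltnW // ltnW. Qed.

Lemma reachA_round_ends l e j s m : reachA L l s j m -> 0 < j <= size s ->
  ent s j.-1 = e ->
  exists s' m' v, reachDone L l s' m' /\ size s' = size s /\ m' e = Some v.
Proof.
elim: j s m => [|j IHj] s m reach_sj /andP[_ js] sj_e //.
have [mchk outcome_sj] := stepA_outcome_exists s j.+1.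
have [stop|continue] := pselect (stop_test s j.+1 m mchk).
  exists s, (upd m (ent s j) mchk), mchk; split; first exact: RD_stop stop.
  by rewrite -sj_e /upd eqxx.
have j_gt0 : 0 < j by rewrite lt0n; apply/eqP => j0; apply: continue; left; rewrite j0.
have js' : j.-1.+1 < size s by rewrite prednK.
case: (IHj _ _ (RA_swap reach_sj outcome_sj continue)).
- by rewrite j_gt0 size_swap_at // ltnW.
- by rewrite ent_swap_at // prednK.
- move=> s' [m' [v [done_s' [size_s' m'e]]]].
  by exists s', m', v; rewrite size_s' size_swap_at.
Qed.

Lemma reachDone_next l s m : reachDone L l s m -> size s = l ->
  exists s' m' v,
    reachDone L l.+1 s' m' /\ size s' = l.+1 /\ m' (diag_pair l.+1) = Some v.
Proof.
move=> done_s size_s.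
case: (reachA_round_ends (e := diag_pair l.+1) (RA_start done_s)).
- by rewrite size_rcons size_s leqnn.
- by rewrite /ent nth_rcons size_s ltnn eqxx.
- move=> s' [m' [v [done_s' [size_s' m'e]]]].
  by exists s', m', v; rewrite size_s' size_rcons size_s.
Qed.

Lemma reachDone_exists l : exists s m, reachDone L l s m /\ size s = l.
Proof.
elim: l => [|l [s [m [done_s size_s]]]].
  by exists [::], (fun _ => None); split=> //; constructor.
by have [s' [m' [v [? [? _]]]]] := reachDone_next done_s size_s; exists s', m'.
Qed.

End Procedure.

Definition diag_block (n' : nat) : seq entry := [seq (n' - h, h.+1) | h <- iota 0 n'.+1].

Lemma diag_listD M N :
  diag_list (M + N) = diag_list M ++ flatten [seq diag_block n' | n' <- iota M N].
Proof. by rewrite /diag_list iotaD map_cat flatten_cat add0n. Qed.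

Lemma diag_listS N : diag_list N.+1 = diag_list N ++ diag_block N.
Proof. by rewrite -addn1 diag_listD; congr (_ ++ _); apply: cats0. Qed.

Lemma leq_size_diag_list N : N <= size (diag_list N).
Proof. by elim: N => // N IHN; rewrite diag_listS size_cat size_map size_iota; lia. Qed.

Lemma nth_diag_list N M k : N < M -> k <= N ->
  nth (0, 0) (diag_list M) (size (diag_list N) + k) = (N - k, k.+1).
Proof.
move=> NM kN; have [d ->] : exists d, M = N.+1 + d by exists (M - N.+1); lia.
have kS : size (diag_list N) + k < size (diag_list N.+1).
  by rewrite diag_listS size_cat size_map size_iota ltn_add2l ltnS.
rewrite diag_listD nth_cat kS diag_listS nth_cat ltnNge leq_addr addKn.
by rewrite (nth_map 0) ?nth_iota ?size_iota ?ltnS.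
Qed.

Lemma diag_pair_surj n i : 0 < i -> exists l, diag_pair l.+1 = (n, i).
Proof.
move=> i_gt0; exists (size (diag_list (n + i.-1)) + i.-1).
rewrite /diag_pair /= nth_diag_list ?leq_addl //; last first.
  by have := leq_size_diag_list (n + i.-1); lia.
by rewrite addnK prednK.
Qed.

Theorem mainTheorem13 (U : countType) (L : nat -> U -> Prop)
  (U_infinite : forall s : seq U, exists x, x \notin s)
  (L_infinite : forall i, 0 < i -> forall s : seq U, exists x, L i x /\ x \notin s) :
  (* at every execution of step (A), sizes of valid T are bounded *)
  (forall l s j m, reachA L l s j m ->
     exists B, forall T, stepA_valid L s j T -> size T <= B) /\
  (* m*_n(L_i) is (eventually) assigned a finite value *)
  (forall n i, 0 < i ->
     exists l s m v, reachDone L l s m /\ m (n, i) = Some v).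
Proof.
split=> [l s j m _|n i i_gt0]; first exact: stepA_valid_bounded.
have [l diag_l] := diag_pair_surj n i_gt0.
have [s [m [done_s size_s]]] := reachDone_exists L l.
have [s' [m' [v [done_s' [_ m'ni]]]]] := reachDone_next done_s size_s.
by exists l.+1, s', m', v; rewrite -diag_l.
Qed.
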